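(* Let $(L,S,\alpha,\beta)$ be a feasible point of the SDP (RS) built from the data $D_\Delta=D+\Delta$, and let $K=F_K(L,D_\Delta)=U_\Delta L(X_\Delta L)^{-1}$. (i) If $\Delta=0$, then $\mathcal{J}(K)\le J_{\rm LQR}$ (in particular $A+BK$ is Schur). (ii) For every $\Delta$ with $\|\Delta\|_{\max}\le\epsilon$, the closed-loop matrix $A+BK$ is Schur stable, $\rho(A+BK)<1$.
   Context: $A\in\mathbb{R}^{n\times n}$, $B\in\mathbb{R}^{n\times m}$ unknown; clean data $D=[Z^{\sf T}\ X^{\sf T}\ U^{\sf T}]^{\sf T}$, $Z,X\in\mathbb{R}^{n\times T}$, $U\in\mathbb{R}^{m\times T}$ with $Z=AX+BU$. Perturbation $\Delta\in\mathbb{R}^{(2n+m)\times T}$, $D_\Delta=D+\Delta=[Z_\Delta^{\sf T}\ X_\Delta^{\sf T}\ U_\Delta^{\sf T}]^{\sf T}$; $\|\Delta\|_{\max}$ is the largest absolute entry; $\epsilon>0$, $J_{\rm LQR}>0$. $Q\succeq0$, $R\succ0$ with symmetric positive definite square root $V$. LQR cost: for $K$ with $A+BK$ Schur, $\mathcal{J}(K)=\sum_{i=1}^n\sum_{t\ge0}(x_t^{\sf T}Qx_t+u_t^{\sf T}Ru_t)$ along $x_{t+1}=Ax_t+Bu_t$, $u_t=Kx_t$, $x_0=e_i$ (equivalently ${\rm tr}((Q+K^{\sf T}RK)P^\star)$ with $P^\star=(A+BK)P^\star(A+BK)^{\sf T}+I$); $\mathcal{J}(K)=+\infty$ if $A+BK$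 is not Schur. Define $F(L,S,D_\Delta)={\rm diag}\Big(\begin{bmatrix}S & VU_\Delta L\\ \ast & X_\Delta L\end{bmatrix},\begin{bmatrix}X_\Delta L-I_n & Z_\Delta L\\ \ast & X_\Delta L\end{bmatrix}\Big)$. The SDP (RS) in variables $L\in\mathbb{R}^{T\times n}$, $S\in\mathbb{R}^{m\times m}$, $\alpha,\beta\in\mathbb{R}$ is the feasibility problem: ${\rm tr}(QX_\Delta L)+{\rm tr}(S)\le J_{\rm LQR}$; $F(L,S,D_\Delta)\succeq0$; $$\begin{bmatrix}X_\Delta L-\beta I_n & 0_{n,n} & 0_{n,m} & 0_{n,n}\\ 0_{n,n} & -X_\Delta L & -L^{\sf T}U_\Delta^{\sf T} & 0_{n,n}\\ 0_{m,n} & \ast & 0_{m,m} & U_\Delta L\\ 0_{n,n} & 0_{n,n} & \ast & X_\Delta L\end{bmatrix}-\alpha N_\Delta\succeq0;\quad \alpha\ge0,\ \beta\ge1,$$ where $N_\Delta={\rm diag}\Big(\bar D_\Delta^{\sf T}\begin{bmatrix}\epsilon^2(2n+m)T\,I_{2n+m} & 0\\ 0 & -I_T\end{bmatrix}\bar D_\Delta,\ 0_{n,n}\Big)$ and $\bar D_\Delta=\begin{bmatrix}I_{2n+m}\\ [Z_\Delta^{\sf T}\ \ -X_\Delta^{\sf T}\ \ -U_\Delta^{\sf T}]\end{bmatrix}\in\mathbb{R}^{(2n+m+T)\times(2n+m)}$. In these matrix inequalities, $\ast$ denotes the block determined by symmetry, and $M\succeq0$ requires $M$ to be symmetric (in particular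 $X_\Delta L$ and $S$ are symmetric). *)

From HB Require Import structures.
From mathcomp Require Import all_boot all_order all_algebra.
From mathcomp Require Import all_classical all_reals all_analysis.
From mathcomp Require Import complex.
Set Implicit Arguments. Unset Strict Implicit. Unset Printing Implicit Defensive.
Import Order.TTheory GRing.Theory Num.Theory.
Local Open Scope ring_scope.

Section Defs.
Variable R : realType.

Definition psd (k : nat) (M : 'M[R]_k) : Prop :=
  M^T = M /\ forall v : 'cV[R]_k, 0 <= (v^T *m M *m v) 0 0.

Definition pd (k : nat) (M : 'M[R]_k) : Prop :=
  M^T = M /\ forall v : 'cV[R]_k, v != 0 -> 0 < (v^T *m M *m v) 0 0.

Definition schur (k : nat) (M : 'M[R]_k) : Prop :=
  forall z : R[i], root (char_poly (map_mx (fun x : R => (x%:C)%C) M)) z -> `|z| < 1.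

Definition mx_maxnorm (p q : nat) (M : 'M[R]_(p, q)) : R :=
  \big[Num.max/0]_(i < p) \big[Num.max/0]_(j < q) `|M i j|.

Definition lqr_cost (n m : nat) (A : 'M[R]_n) (B : 'M[R]_(n, m))
    (Q : 'M[R]_n) (Rw : 'M[R]_m) (K : 'M[R]_(m, n)) : \bar R :=
  if `[< schur (A + B *m K) >] then
    (\sum_(i < n) \sum_(t <oo)
        (let x : 'cV[R]_n := (A + B *m K) ^+ t *m delta_mx i (@ord0 0) in
         let u : 'cV[R]_m := K *m x in
         ((x^T *m Q *m x) 0 0 + (u^T *m Rw *m u) 0 0)%:E))%E
  else +oo%E.

Definition Zpart (n m T : nat) (D : 'M[R]_(n + n + m, T)) : 'M[R]_(n, T) :=
  usubmx (usubmx D).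
Definition Xpart (n m T : nat) (D : 'M[R]_(n + n + m, T)) : 'M[R]_(n, T) :=
  dsubmx (usubmx D).
Definition Upart (n m T : nat) (D : 'M[R]_(n + n + m, T)) : 'M[R]_(m, T) :=
  dsubmx D.

Definition Fmat (n m T : nat) (V : 'M[R]_m) (L : 'M[R]_(T, n)) (S : 'M[R]_m)
    (D : 'M[R]_(n + n + m, T)) : 'M[R]_((m + n) + (n + n)) :=
  let Z := Zpart D in let X := Xpart D in let U := Upart D in
  block_mx (block_mx S (V *m U *m L) (V *m U *m L)^T (X *m L)) 0
           0 (block_mx (X *m L - 1%:M) (Z *m L) (Z *m L)^T (X *m L)).

Definition Dbar (n m T : nat) (D : 'M[R]_(n + n + m, T)) :
    'M[R]_(n + n + m + T, n + n + m) :=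
  col_mx 1%:M (row_mx (row_mx (Zpart D)^T (- (Xpart D)^T)) (- (Upart D)^T)).

Definition Nmat (n m T : nat) (eps : R) (D : 'M[R]_(n + n + m, T)) :
    'M[R]_(n + n + m + n) :=
  block_mx ((Dbar D)^T *m
              block_mx ((eps ^+ 2 * (n + n + m)%:R * T%:R)%:M) 0 0 (- 1%:M)
            *m Dbar D) 0 0 (0 : 'M[R]_n).

Definition Gmat (n m T : nat) (beta : R) (L : 'M[R]_(T, n))
    (D : 'M[R]_(n + n + m, T)) : 'M[R]_(n + n + m + n) :=
  let X := Xpart D in let U := Upart D in
  block_mx
    (block_mx (block_mx (X *m L - beta%:M) 0 0 (- (X *m L)))
              (col_mx (0 : 'M[R]_(n, m)) (- (L^T *m U^T)))
              (row_mx (0 : 'M[R]_(m, n)) (- (L^T *m U^T))^T)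
              (0 : 'M[R]_m))
    (col_mx (0 : 'M[R]_(n + n, n)) (U *m L))
    (row_mx (0 : 'M[R]_(n, n + n)) (U *m L)^T)
    (X *m L).

Definition RS_feasible (n m T : nat) (Q : 'M[R]_n) (V : 'M[R]_m)
    (eps JLQR : R) (D : 'M[R]_(n + n + m, T))
    (L : 'M[R]_(T, n)) (S : 'M[R]_m) (alpha beta : R) : Prop :=
  [/\ \tr (Q *m (Xpart D *m L)) + \tr S <= JLQR,
      psd (Fmat V L S D),
      psd (Gmat beta L D - alpha *: Nmat eps D),
      0 <= alpha & 1 <= beta].

Definition FK (n m T : nat) (L : 'M[R]_(T, n)) (D : 'M[R]_(n + n + m, T)) :
    'M[R]_(m, n) :=
  Upart D *m L *m invmx (Xpart D *m L).

End Defs.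

From HB Require Import structures.
From mathcomp Require Import all_boot all_order all_algebra.
From mathcomp Require Import all_classical all_reals all_analysis.
From mathcomp Require Import complex.
From mathcomp Require Import ring lra.
Set Implicit Arguments. Unset Strict Implicit. Unset Printing Implicit Defensive.
Import Order.TTheory GRing.Theory Num.Theory.
Local Open Scope ring_scope.

(* [Y := X_D L] is a quadratic Lyapunov certificate for the closed loop
   [M := A + B K].  The second diagonal block of [F] gives [Y >= I], so [X_D L]
   is invertible and [K Y = U_D L].  Without noise [Z L = M Y], and that block is
   the Schur-complement form of [Y >= M Y M^T + I]; summing it along trajectories
   bounds the LQR cost by [tr (Q Y) + tr (V K Y K^T V)], and the first block of
   [F] bounds the second trace by [tr S].  With noise, the robust LMI evaluated
   at [(x, x A, x B, - x B K)] reads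
   [x Y x^T - beta |x|^2 - (x M) Y (x M)^T >= alpha x N_D x^T]: the multiplier
   term is nonnegative because the data residual at that vector is
   [(x, - x A, - x B) Delta], whose norm the entrywise bound [eps] controls.
   In both cases the Lyapunov decrease, applied to the real and imaginary parts
   of an eigenvector, gives Schur stability. *)

Section QuadraticForms.
Variable R : realType.
Implicit Types (p q k : nat).

Definition bform p q (M : 'M[R]_(p, q)) (x : 'rV[R]_p) (y : 'rV[R]_q) : R :=
  (x *m M *m y^T) 0 0.

Definition qform k (M : 'M[R]_k) (x : 'rV[R]_k) : R := bform M x x.

Definition sqnorm k (x : 'rV[R]_k) : R := (x *m x^T) 0 0.

Lemma bform_tr p q (M : 'M[R]_(p, q)) x y : bform M^T y x = bform M x y.
Proof.
have tr11 (N : 'M[R]_1) : N^T 0 0 = N 0 0 by rewrite mxE.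
by rewrite /bform -tr11 !trmx_mul !trmxK mulmxA.
Qed.

Lemma bform_sym k (M : 'M[R]_k) x y : M^T = M -> bform M y x = bform M x y.
Proof. by move=> sM; rewrite -[in LHS]sM bform_tr. Qed.

Lemma bform_mulmxl p q r (N : 'M[R]_(p, q)) (M : 'M[R]_(q, r)) x y :
  bform (N *m M) x y = bform M (x *m N) y.
Proof. by rewrite /bform mulmxA. Qed.

Lemma bform0l p q (M : 'M[R]_(p, q)) y : bform M 0 y = 0.
Proof. by rewrite /bform !mul0mx mxE. Qed.

Lemma bform0r p q (M : 'M[R]_(p, q)) x : bform M x 0 = 0.
Proof. by rewrite /bform trmx0 mulmx0 mxE. Qed.

Lemma bform0m p q x y : bform (0 : 'M[R]_(p, q)) x y = 0.
Proof. by rewrite /bform mulmx0 mul0mx mxE. Qed.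

Lemma bformNr p q (M : 'M[R]_(p, q)) x y : bform M x (- y) = - bform M x y.
Proof. by rewrite /bform linearN /= mulmxN mxE. Qed.

Lemma bformNm p q (M : 'M[R]_(p, q)) x y : bform (- M) x y = - bform M x y.
Proof. by rewrite /bform mulmxN mulNmx mxE. Qed.

Lemma bform_col_mx p1 p2 q (M1 : 'M[R]_(p1, q)) (M2 : 'M[R]_(p2, q)) x1 x2 y :
  bform (col_mx M1 M2) (row_mx x1 x2) y = bform M1 x1 y + bform M2 x2 y.
Proof. by rewrite /bform mul_row_col mulmxDl mxE. Qed.

Lemma bform_row_mx p q1 q2 (M1 : 'M[R]_(p, q1)) (M2 : 'M[R]_(p, q2)) x y1 y2 :
  bform (row_mx M1 M2) x (row_mx y1 y2) = bform M1 x y1 + bform M2 x y2.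
Proof. by rewrite /bform mul_mx_row tr_row_mx mul_row_col mxE. Qed.

Lemma qform0 k (M : 'M[R]_k) : qform M 0 = 0.
Proof. exact: bform0l. Qed.

Lemma qform0m k (x : 'rV[R]_k) : qform 0 x = 0.
Proof. exact: bform0m. Qed.

Lemma qformN k (M : 'M[R]_k) x : qform M (- x) = qform M x.
Proof. by rewrite /qform /bform linearN /= mulmxN !mulNmx opprK. Qed.

Lemma qformDm k (M N : 'M[R]_k) x : qform (M + N) x = qform M x + qform N x.
Proof. by rewrite /qform /bform mulmxDr mulmxDl mxE. Qed.

Lemma qformNm k (M : 'M[R]_k) x : qform (- M) x = - qform M x.
Proof. by rewrite /qform /bform mulmxN mulNmx mxE. Qed.

Lemma qformBm k (M N : 'M[R]_k) x : qform (M - N) x = qform M x - qform N x.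
Proof. by rewrite qformDm qformNm. Qed.

Lemma qformZm k a (M : 'M[R]_k) x : qform (a *: M) x = a * qform M x.
Proof. by rewrite /qform /bform -scalemxAr -scalemxAl mxE. Qed.

Lemma qform_delta k (M : 'M[R]_k) j : qform M (delta_mx 0 j) = M j j.
Proof. by rewrite /qform /bform -rowE trmx_delta -colE !mxE. Qed.

Lemma qform_scalar k a (x : 'rV[R]_k) : qform a%:M x = a * sqnorm x.
Proof. by rewrite /qform /bform mul_mx_scalar -scalemxAl mxE. Qed.

Lemma qform_mulmx p q (P : 'M[R]_(p, q)) (M : 'M[R]_p) x :
  qform (P^T *m M *m P) x = qform M (x *m P^T).
Proof. by rewrite /qform /bform trmx_mul trmxK !mulmxA. Qed.

Lemma qform_block p q (M11 : 'M[R]_p) M12 M21 (M22 : 'M[R]_q) x y :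
  qform (block_mx M11 M12 M21 M22) (row_mx x y) =
  qform M11 x + bform M12 x y + bform M21 y x + qform M22 y.
Proof.
rewrite /qform /bform tr_row_mx mul_row_block mul_row_col !mulmxDl !mxE; lra.
Qed.

Lemma qform_block_tr p q (M11 : 'M[R]_p) M12 (M22 : 'M[R]_q) x y :
  qform (block_mx M11 M12 M12^T M22) (row_mx x y) =
  qform M11 x + 2 * bform M12 x y + qform M22 y.
Proof. by rewrite qform_block bform_tr; ring. Qed.

Lemma qform_diag_block p q (M11 : 'M[R]_p) (M22 : 'M[R]_q) x y :
  qform (block_mx M11 0 0 M22) (row_mx x y) = qform M11 x + qform M22 y.
Proof. by rewrite qform_block !bform0m addr0 addr0. Qed.

Lemma bformDl p q (M : 'M[R]_(p, q)) x1 x2 y :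
  bform M (x1 + x2) y = bform M x1 y + bform M x2 y.
Proof. by rewrite /bform !mulmxDl mxE. Qed.

Lemma bformDr p q (M : 'M[R]_(p, q)) x y1 y2 :
  bform M x (y1 + y2) = bform M x y1 + bform M x y2.
Proof. by rewrite /bform linearD /= mulmxDr mxE. Qed.

Lemma bformZl p q (M : 'M[R]_(p, q)) a x y : bform M (a *: x) y = a * bform M x y.
Proof. by rewrite /bform -!scalemxAl mxE. Qed.

Lemma bformZr p q (M : 'M[R]_(p, q)) a x y : bform M x (a *: y) = a * bform M x y.
Proof. by rewrite /bform linearZ /= -scalemxAr mxE. Qed.

Lemma qform_lin k (M : 'M[R]_k) a b r s : M^T = M ->
  qform M (r *: a + s *: b) =
  r ^+ 2 * qform M a + 2 * r * s * bform M a b + s ^+ 2 * qform M b.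
Proof.
move=> sM; rewrite /qform bformDl !bformDr !bformZl !bformZr (bform_sym _ _ sM).
ring.
Qed.

Lemma qformD k (M : 'M[R]_k) a b : M^T = M ->
  qform M (a + b) = qform M a + 2 * bform M a b + qform M b.
Proof. by move=> sM; rewrite -[a]scale1r -[b]scale1r qform_lin // !scale1r; ring. Qed.

Lemma sqnorm_sum k (x : 'rV[R]_k) : sqnorm x = \sum_i x 0 i ^+ 2.
Proof. by rewrite /sqnorm mxE; apply: eq_bigr => i _; rewrite [x^T _ _]mxE expr2. Qed.

Lemma sqnorm_ge0 k (x : 'rV[R]_k) : 0 <= sqnorm x.
Proof. by rewrite sqnorm_sum sumr_ge0 // => i _; rewrite sqr_ge0. Qed.

Lemma sqnorm_eq0 k (x : 'rV[R]_k) : (sqnorm x == 0) = (x == 0).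
Proof.
apply/idP/eqP => [|->]; last by rewrite sqnorm_sum big1 // => i _; rewrite mxE expr0n.
rewrite sqnorm_sum => /eqP/psumr_eq0P-/(_ (fun i _ => sqr_ge0 _)) x0.
by apply/rowP => i; rewrite mxE; apply/eqP; rewrite -sqrf_eq0 x0.
Qed.

Lemma sqnormN k (x : 'rV[R]_k) : sqnorm (- x) = sqnorm x.
Proof. by rewrite /sqnorm linearN /= mulmxN mulNmx opprK. Qed.

Lemma sqnorm_row_mx p q (x : 'rV[R]_p) (y : 'rV[R]_q) :
  sqnorm (row_mx x y) = sqnorm x + sqnorm y.
Proof. by rewrite /sqnorm tr_row_mx mul_row_col mxE. Qed.

Lemma psd_qform k (M : 'M[R]_k) : psd M -> forall x, 0 <= qform M x.
Proof. by case=> _ M0 x; have := M0 x^T; rewrite trmxK. Qed.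

Lemma psdP k (M : 'M[R]_k) : M^T = M -> (forall x, 0 <= qform M x) -> psd M.
Proof. by move=> sM M0; split => // v; have := M0 v^T; rewrite /qform /bform trmxK. Qed.

Lemma unitmx_of_sqnorm_le k (Y : 'M[R]_k) :
  (forall x, sqnorm x <= qform Y x) -> Y \in unitmx.
Proof.
move=> Y_ge; rewrite unitmxE unitfE; apply/negP => /det0P[x x_neq0 xY].
have := Y_ge x; rewrite /qform /bform xY mul0mx mxE => x_le0.
by move: x_neq0; rewrite -sqnorm_eq0 eq_le x_le0 sqnorm_ge0.
Qed.

End QuadraticForms.

Section GramFactorization.
Variable R : realType.

Lemma qform_block_scalar n (a : R) (b : 'rV[R]_n) (P : 'M[R]_n) s y :
  qform (block_mx a%:M b b^T P) (row_mx s%:M y) =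
  a * s ^+ 2 + 2 * s * (b *m y^T) 0 0 + qform P y.
Proof.
rewrite qform_block_tr qform_scalar /sqnorm /bform tr_scalar_mx !mul_scalar_mx.
by rewrite -scalemxAl !mxE eqxx mulr1n; ring.
Qed.

Lemma psd_block_scalar n (a : R) (b : 'rV[R]_n) (P : 'M[R]_n) :
  psd (block_mx a%:M b b^T P) ->
  [/\ 0 <= a, a = 0 -> b = 0 & psd (P - a^-1 *: (b^T *m b))].
Proof.
move=> psdM; have [symM _] := psdM.
have M0 s y : 0 <= a * s ^+ 2 + 2 * s * (b *m y^T) 0 0 + qform P y.
  by rewrite -qform_block_scalar; apply: psd_qform.
have P0 y : 0 <= qform P y.
  by have := M0 0 y; rewrite expr0n /= !mulr0 mul0r !add0r.
have a0 : 0 <= a.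
  by have := M0 1 0; rewrite trmx0 mulmx0 mxE qform0 !mulr0 !addr0 expr1n mulr1.
have symP : P^T = P.
  by move: symM; rewrite tr_block_mx trmxK => /eq_block_mx[].
split=> // [a_eq0|]; last apply: psdP => [|y].
- apply/rowP => j; rewrite mxE; have [//|bj_neq0] := eqVneq (b 0 j) 0; exfalso.
  pose y : 'rV[R]_n := delta_mx 0 j.
  have by_bj : (b *m y^T) 0 0 = b 0 j.
    by rewrite trmx_delta -colE mxE.
  (* For a = 0 the form is affine in s, so it cannot stay nonnegative. *)
  have := M0 (- (qform P y + 1) / (2 * b 0 j)) y.
  rewrite a_eq0 by_bj mul0r add0r.
  have -> : 2 * (- (qform P y + 1) / (2 * b 0 j)) * b 0 j = - (qform P y + 1).
    by field.
  lra.
- by rewrite linearB /= linearZ /= trmx_mul trmxK symP.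
- rewrite qformBm qformZm.
  have [a_eq0|a_neq0] := eqVneq a 0; first by rewrite a_eq0 invr0 mul0r subr0.
  have bb_y : qform (b^T *m b) y = (b *m y^T) 0 0 ^+ 2.
    rewrite /qform /bform mulmxA -[y *m b^T *m b *m y^T]mulmxA mxE big_ord1 expr2.
    by congr (_ * _); rewrite !mxE; apply: eq_bigr => i _; rewrite !mxE mulrC.
  have := M0 (- (b *m y^T) 0 0 / a) y; rewrite bb_y.
  set c := (b *m y^T) 0 0.
  have -> : a * (- c / a) ^+ 2 + 2 * (- c / a) * c = - (a^-1 * c ^+ 2).
    by field.
  lra.
Qed.

Lemma psd_gram n (P : 'M[R]_n) : psd P -> exists C : 'M[R]_n, P = C^T *m C.
Proof.
elim: n P => [|n IH] P psdP; first by exists 0; apply/matrixP => -[].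
pose P1 : 'M[R]_(1 + n) := P.
set a := ulsubmx P1 0 0; set b := ursubmx P1; set P' := drsubmx P1.
have eP : P1 = block_mx a%:M b b^T P'.
  have symP1 : P1^T = P1 by case: psdP.
  move: symP1; rewrite -[P1]submxK tr_block_mx => /eq_block_mx[_ _ dl_b _].
  by rewrite /a /b /P' dl_b -mx11_scalar submxK.
have psdP1 : psd (block_mx a%:M b b^T P') by rewrite -eP.
have [a0 a0_b0 psdP2] := psd_block_scalar psdP1.
have [C' eC'] := IH _ psdP2.
pose r := Num.sqrt a.
have rr : r * r = a by rewrite -expr2 sqr_sqrtr.
have rb : r *: (r^-1 *: b) = b.
  have [/a0_b0 ->|a_neq0] := eqVneq a 0; first by rewrite !scaler0.
  by rewrite scalerA mulfV ?scale1r // sqrtr_eq0 -ltNge lt_def a_neq0 a0.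
pose C : 'M[R]_(1 + n) := block_mx r%:M (r^-1 *: b) 0 C'.
exists C; change (P1 = C^T *m C).
rewrite eP /C tr_block_mx !trmx0 tr_scalar_mx mulmx_block.
rewrite !mulmx0 !mul0mx ?addr0 ?add0r; congr block_mx.
- by rewrite -scalar_mxM rr.
- by rewrite mul_scalar_mx rb.
- by rewrite scalar_mxC mul_scalar_mx -linearZ /= rb.
- rewrite -eC' !linearZ /= -scalemxAl scalerA -invfM rr.
  by rewrite [RHS]addrC scalerN subrK.
Qed.

End GramFactorization.

Section LyapunovStability.
Variable R : realType.
Local Open Scope complex_scope.

Lemma eigen_re_im n (M : 'M[R]_n) (v : 'rV[R[i]]_n) z :
  v *m map_mx (real_complex R) M = z *: v ->
  let a := map_mx (@complex.Re R) v in let b := map_mx (@complex.Im R) v in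
  a *m M = complex.Re z *: a - complex.Im z *: b /\
  b *m M = complex.Im z *: a + complex.Re z *: b.
Proof.
move=> /rowP eig a b; split; apply/rowP => j; have := eig j; rewrite !mxE.
- move=> /(congr1 (@complex.Re R)); rewrite raddf_sum /=.
  have -> : complex.Re (z * v 0 j) =
      complex.Re z * complex.Re (v 0 j) - complex.Im z * complex.Im (v 0 j).
    by move: (z) (v 0 j) => [? ?] [? ?] /=; ring.
  by move=> <-; apply: eq_bigr => k _; rewrite !mxE; case: (v 0 k) => ? ?; simpc.
- move=> /(congr1 (@complex.Im R)); rewrite raddf_sum /=.
  have -> : complex.Im (z * v 0 j) =
      complex.Im z * complex.Re (v 0 j) + complex.Re z * complex.Im (v 0 j).
    by move: (z) (v 0 j) => [? ?] [? ?] /=; ring.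
  by move=> <-; apply: eq_bigr => k _; rewrite !mxE; case: (v 0 k) => ? ?; simpc.
Qed.

Lemma re_im_sqnorm_gt0 n (v : 'rV[R[i]]_n) : v != 0 ->
  0 < sqnorm (map_mx (@complex.Re R) v) + sqnorm (map_mx (@complex.Im R) v).
Proof.
move=> v_neq0; rewrite lt_def addr_ge0 ?sqnorm_ge0 // andbT.
apply: contra v_neq0 => /eqP sum0.
have := sqnorm_ge0 (map_mx (@complex.Re R) v).
have := sqnorm_ge0 (map_mx (@complex.Im R) v).
have [/eqP|re_neq0] := eqVneq (sqnorm (map_mx (@complex.Re R) v)) 0; last lra.
have [/eqP|im_neq0] := eqVneq (sqnorm (map_mx (@complex.Im R) v)) 0; last lra.
rewrite !sqnorm_eq0 => /eqP/rowP im0 /eqP/rowP re0 _ _.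
apply/eqP/rowP => j; have := re0 j; have := im0 j; rewrite !mxE.
by case: (v 0 j) => ? ? /= -> ->.
Qed.

(* Vectors are rows, so the decrease is along [x |-> x M], i.e. along the
   dynamics of [M^T], which has the same spectrum as [M]. *)
Definition lyapunov_cert n (M Y : 'M[R]_n) : Prop :=
  [/\ Y^T = Y, forall x, 0 <= qform Y x &
      forall x, qform Y (x *m M) + sqnorm x <= qform Y x].

Lemma lyapunov_schur n (M Y : 'M[R]_n) : lyapunov_cert M Y -> schur M.
Proof.
move=> [symY Y0 decr] z; rewrite -eigenvalue_root_char => /eigenvalueP[v eig v_neq0].
have [aM bM] := eigen_re_im eig.
set a := map_mx _ v in aM bM; set b := map_mx _ v in aM bM.
set r := complex.Re z in aM bM; set s := complex.Im z in aM bM.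
(* [M] acts on the real and imaginary parts of [v] as a rotation scaled by
   [|z|], so the form on the pair is multiplied by [|z|^2]. *)
have rot : qform Y (a *m M) + qform Y (b *m M) =
    (r ^+ 2 + s ^+ 2) * (qform Y a + qform Y b).
  by rewrite aM bM -scaleNr !qform_lin //; ring.
have N0 := re_im_sqnorm_gt0 v_neq0; rewrite -/a -/b in N0.
have Ma := decr a; have Mb := decr b; have Ya := Y0 a; have Yb := Y0 b.
rewrite normc_def -[1]/((1 : R)%:C) ltcR -sqrtr1 ltr_sqrt // ltNge -/r -/s.
apply/negP => rs_ge1.
have : qform Y a + qform Y b <= (r ^+ 2 + s ^+ 2) * (qform Y a + qform Y b).
  by rewrite ler_peMl // addr_ge0.
lra.
Qed.

Lemma lyapunov_sum_le n (M Y : 'M[R]_n) : lyapunov_cert M Y ->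
  forall N y, \sum_(t < N) sqnorm (y *m M ^+ t) <= qform Y y.
Proof.
move=> [_ Y0 decr]; elim=> [|N IH] y; first by rewrite big_ord0.
rewrite big_ord_recl expr0 mulmx1.
under eq_bigr do rewrite exprS mulmxA.
by have := IH (y *m M); have := decr y; have := Y0 (y *m M ^+ N.+1); lra.
Qed.

Lemma mxtrace_qform p n (P : 'M[R]_(p, n)) (Y : 'M[R]_n) :
  \tr (P *m Y *m P^T) = \sum_j qform Y (row j P).
Proof.
apply: eq_bigr => j _; rewrite /qform /bform -row_mul !mxE.
by apply: eq_bigr => k _; rewrite !mxE.
Qed.

Lemma lyapunov_frobenius_le p n (M Y : 'M[R]_n) (P : 'M[R]_(p, n)) N :
  lyapunov_cert M Y ->
  \sum_(t < N) \sum_(i < n) \sum_(j < p) (P *m M ^+ t) j i ^+ 2 <= \tr (P *m Y *m P^T).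
Proof.
move=> cert; rewrite mxtrace_qform.
under eq_bigr do rewrite exchange_big.
rewrite exchange_big; apply: ler_sum => j _.
have -> : \sum_(t < N) \sum_(i < n) (P *m M ^+ t) j i ^+ 2 =
    \sum_(t < N) sqnorm (row j P *m M ^+ t).
  apply: eq_bigr => t _; rewrite sqnorm_sum.
  by apply: eq_bigr => i _; rewrite -row_mul [row _ _ _ _]mxE.
exact: lyapunov_sum_le.
Qed.

End LyapunovStability.

Section LQRCost.
Variable R : realType.

Lemma sum_nneseries_le n (f : 'I_n -> nat -> R) (J : R) :
  (forall i t, 0 <= f i t) -> (forall N, \sum_(t < N) \sum_(i < n) f i t <= J) ->
  (\sum_(i < n) \sum_(t <oo) (f i t)%:E <= J%:E)%E.
Proof.
move=> f0 partial_le.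
rewrite -nneseries_sum; last by move=> i t _; rewrite lee_fin.
apply: (lime_le (is_cvg_nneseries _)).
  by move=> t _ _; apply: sume_ge0 => i _; rewrite lee_fin.
apply: nearW => N /=.
under eq_bigr do rewrite sumEFin.
by rewrite sumEFin lee_fin big_mkord.
Qed.

Lemma gram_cV_form n p q (C : 'M[R]_(p, q)) (N : 'M[R]_(q, n)) i :
  let x : 'cV_q := N *m delta_mx i 0 in
  (x^T *m (C^T *m C) *m x) 0 0 = \sum_j (C *m N) j i ^+ 2.
Proof.
move=> x; have -> : x^T *m (C^T *m C) *m x = (C *m x)^T *m (C *m x).
  by rewrite !trmx_mul !mulmxA.
rewrite [C *m (N *m _)]mulmxA -colE mxE.
by apply: eq_bigr => j _; rewrite !mxE expr2.
Qed.

Lemma lqr_cost_le_lyapunov n m (A : 'M[R]_n) (B : 'M[R]_(n, m)) (Q : 'M[R]_n)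
    (Rw V : 'M[R]_m) (K : 'M[R]_(m, n)) (Y : 'M[R]_n) :
  psd Q -> Rw = V^T *m V -> lyapunov_cert (A + B *m K) Y ->
  (lqr_cost A B Q Rw K <= (\tr (Q *m Y) + \tr (V *m K *m Y *m (V *m K)^T))%:E)%E.
Proof.
move=> /psd_gram[C ->] -> cert.
rewrite /lqr_cost asboolT; last exact: lyapunov_schur cert.
set M := A + B *m K in cert *.
pose f i t := \sum_j (C *m M ^+ t) j i ^+ 2 + \sum_j (V *m K *m M ^+ t) j i ^+ 2.
rewrite (eq_bigr (fun i => \sum_(t <oo) (f i t)%:E)%E); last first.
  move=> i _; apply: eq_eseriesr => t _; congr (_%:E).
  rewrite /= [K *m _]mulmxA.
  have /= -> := gram_cV_form C (M ^+ t) i; have /= -> := gram_cV_form V (K *m M ^+ t) i.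
  by rewrite mulmxA.
apply: sum_nneseries_le => [i t|N].
  by rewrite addr_ge0 // sumr_ge0 // => j _; exact: sqr_ge0.
under eq_bigr do rewrite big_split /=.
have -> : \tr (C^T *m C *m Y) = \tr (C *m Y *m C^T).
  by rewrite -mulmxA mxtrace_mulC.
by rewrite big_split /= lerD // lyapunov_frobenius_le.
Qed.

End LQRCost.

Section EntrywiseBounds.
Variable R : realType.

Lemma sqr_sum_le N (y : 'I_N -> R) : (\sum_i y i) ^+ 2 <= N%:R * \sum_i y i ^+ 2.
Proof.
set S := \sum_i y i; set Q := \sum_i y i ^+ 2.
have : 0 <= \sum_i \sum_j (y i - y j) ^+ 2.
  by apply: sumr_ge0 => i _; apply: sumr_ge0 => j _; exact: sqr_ge0.
have -> : \sum_i \sum_j (y i - y j) ^+ 2 = (N%:R * Q - S ^+ 2) *+ 2.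
  under eq_bigr do under eq_bigr do rewrite sqrrB.
  under eq_bigr do rewrite !big_split /= sumr_const card_ord sumrN sumrMnl -mulr_sumr -/S -/Q.
  rewrite !big_split /= sumrN !sumrMnl -mulr_suml -/S -/Q sumr_const card_ord.
  by ring.
by rewrite pmulrn_lge0 // subr_ge0.
Qed.

Lemma sqnorm_mul_le p q (x : 'rV[R]_p) (D : 'M[R]_(p, q)) eps :
  0 <= eps -> (forall i j, `|D i j| <= eps) ->
  sqnorm (x *m D) <= eps ^+ 2 * p%:R * q%:R * sqnorm x.
Proof.
move=> eps0 D_le; rewrite !sqnorm_sum.
have entry_le j : (x *m D) 0 j ^+ 2 <= eps ^+ 2 * p%:R * \sum_i x 0 i ^+ 2.
  have abs_le : `|(x *m D) 0 j| <= eps * \sum_i `|x 0 i|.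
    rewrite mxE mulr_sumr; apply: le_trans (ler_norm_sum _ _ _) _.
    by apply: ler_sum => i _; rewrite normrM mulrC ler_wpM2r.
  rewrite -real_normK ?num_real //; apply: le_trans (_ : (eps * \sum_i `|x 0 i|) ^+ 2 <= _).
    by rewrite lerXn2r ?nnegrE ?mulr_ge0 ?sumr_ge0.
  rewrite exprMn -mulrA ler_wpM2l ?sqr_ge0 //.
  have -> : \sum_i x 0 i ^+ 2 = \sum_i `|x 0 i| ^+ 2.
    by apply: eq_bigr => i _; rewrite real_normK ?num_real.
  exact: sqr_sum_le.
apply: le_trans (ler_sum _ (fun j _ => entry_le j)) _.
by rewrite sumr_const card_ord -mulr_natr; lra.
Qed.

Lemma mx_maxnorm_ge p q (M : 'M[R]_(p, q)) i j : `|M i j| <= mx_maxnorm M.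
Proof.
rewrite /mx_maxnorm (bigD1 i) //= le_max; apply/orP; left.
by rewrite (bigD1 j) //= le_max lexx.
Qed.

End EntrywiseBounds.

Section FeasiblePoints.
Variables (R : realType) (n m T : nat).
Implicit Types (D : 'M[R]_(n + n + m, T)) (L : 'M[R]_(T, n)).

Lemma Fmat_psd_facts (V S : 'M[R]_m) L D : psd (Fmat V L S D) ->
  let Y := Xpart D *m L in
  [/\ Y^T = Y,
      forall x y, 0 <= qform S x + 2 * bform (V *m (Upart D *m L)) x y + qform Y y &
      forall y z, 0 <= qform (Y - 1%:M) y + 2 * bform (Zpart D *m L) y z + qform Y z].
Proof.
move=> psdF Y; have [symF _] := psdF.
move: symF; rewrite /Fmat !tr_block_mx !trmx0 => /eq_block_mx[+ _ _ _].
move=> /eq_block_mx[_ _ _ symY]; split => // [x y|y z].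
- have := psd_qform psdF (row_mx (row_mx x y) 0).
  by rewrite /Fmat qform_diag_block qform0 addr0 qform_block_tr mulmxA.
- have := psd_qform psdF (row_mx 0 (row_mx y z)).
  by rewrite /Fmat qform_diag_block qform0 add0r qform_block_tr.
Qed.

Lemma Fmat_psd_ge1 (V S : 'M[R]_m) L D : psd (Fmat V L S D) ->
  forall x, sqnorm x <= qform (Xpart D *m L) x.
Proof.
move=> /Fmat_psd_facts[_ _ F22] x; have := F22 x 0.
by rewrite bform0r qform0 mulr0 !addr0 qformBm qform_scalar mul1r subr_ge0.
Qed.

Lemma FK_mulmx (V S : 'M[R]_m) L D : psd (Fmat V L S D) ->
  FK L D *m (Xpart D *m L) = Upart D *m L.
Proof. by move=> /Fmat_psd_ge1/unitmx_of_sqnorm_le Y_unit; rewrite mulmxKV. Qed.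

Lemma Fmat_psd_trace_le (V S : 'M[R]_m) L D : psd (Fmat V L S D) ->
  \tr (V *m FK L D *m (Xpart D *m L) *m (V *m FK L D)^T) <= \tr S.
Proof.
move=> psdF; set VK := V *m FK L D; have [_ F11 _] := Fmat_psd_facts psdF.
rewrite mxtrace_qform; apply: ler_sum => j _.
have := F11 (delta_mx 0 j) (- row j VK).
rewrite -(FK_mulmx psdF) mulmxA -/VK bform_mulmxl -rowE bformNr qformN qform_delta.
rewrite -/(qform _ (row j VK)); lra.
Qed.

End FeasiblePoints.

Section RobustLMI.
Variables (R : realType) (n m T : nat).
Implicit Types (D : 'M[R]_(n + n + m, T)) (L : 'M[R]_(T, n)).

Lemma Gmat_qform beta L D x1 x2 x3 x4 :
  let Y := Xpart D *m L in let W := Upart D *m L in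
  qform (Gmat beta L D) (row_mx (row_mx (row_mx x1 x2) x3) x4) =
  qform (Y - beta%:M) x1 - qform Y x2 - 2 * bform W x3 x2 + 2 * bform W x3 x4 + qform Y x4.
Proof.
move=> Y W; rewrite /Gmat -/Y -/W -trmx_mul -/W !qform_block.
rewrite !bform_col_mx !bform_row_mx !bform0m qformNm qform0m linearN /= trmxK.
by rewrite !bformNm !bform_tr; ring.
Qed.

Lemma Gmat_qform_closed_loop beta L D (A : 'M[R]_n) (B : 'M[R]_(n, m))
    (K : 'M[R]_(m, n)) x :
  let Y := Xpart D *m L in Y^T = Y -> K *m Y = Upart D *m L ->
  qform (Gmat beta L D) (row_mx (row_mx (row_mx x (x *m A)) (x *m B)) (- (x *m B *m K))) =
  qform Y x - beta * sqnorm x - qform Y (x *m (A + B *m K)).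
Proof.
move=> Y symY KY; rewrite Gmat_qform -/Y -KY !(bform_mulmxl K) bformNr qformN.
rewrite -/(qform Y (x *m B *m K)) mulmxDr mulmxA qformD // qformBm qform_scalar.
by rewrite (bform_sym _ _ symY); ring.
Qed.

Lemma Nmat_qform eps D (x : 'rV[R]_(n + n + m)) (y : 'rV[R]_n) :
  qform (Nmat eps D) (row_mx x y) =
  eps ^+ 2 * (n + n + m)%:R * T%:R * sqnorm x -
  sqnorm (x *m col_mx (col_mx (Zpart D) (- Xpart D)) (- Upart D)).
Proof.
rewrite /Nmat qform_diag_block qform0m addr0 qform_mulmx.
have -> : x *m (Dbar D)^T =
    row_mx x (x *m col_mx (col_mx (Zpart D) (- Xpart D)) (- Upart D)).
  rewrite /Dbar tr_col_mx trmx1 mul_mx_row mulmx1 !tr_row_mx !linearN /= !trmxK.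
  by [].
by rewrite qform_diag_block qformNm !qform_scalar mul1r.
Qed.

Lemma data_parts_add (Z X : 'M[R]_(n, T)) (U : 'M[R]_(m, T)) Delta :
  let DD := col_mx (col_mx Z X) U + Delta in
  [/\ Zpart DD = Z + Zpart Delta, Xpart DD = X + Xpart Delta & Upart DD = U + Upart Delta].
Proof.
rewrite -[Delta]vsubmxK -[usubmx Delta]vsubmxK /Zpart /Xpart /Upart.
by rewrite !add_col_mx !col_mxKu !col_mxKd.
Qed.

Lemma data_residual (A : 'M[R]_n) (B : 'M[R]_(n, m)) (Z X : 'M[R]_(n, T))
    (U : 'M[R]_(m, T)) Delta (x : 'rV[R]_n) :
  Z = A *m X + B *m U ->
  let DD := col_mx (col_mx Z X) U + Delta in
  row_mx (row_mx x (x *m A)) (x *m B) *m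
    col_mx (col_mx (Zpart DD) (- Xpart DD)) (- Upart DD) =
  row_mx (row_mx x (- (x *m A))) (- (x *m B)) *m Delta.
Proof.
move=> eZ DD; have [-> -> ->] := data_parts_add Z X U Delta.
rewrite -[in RHS](vsubmxK Delta) -[usubmx Delta in RHS]vsubmxK !mul_row_col eZ.
rewrite -/(Zpart Delta) -/(Xpart Delta) -/(Upart Delta).
rewrite !(mulmxN, mulNmx, mulmxDr, mulmxA).
move: (x *m A *m X) (x *m B *m U) (x *m Zpart Delta) (x *m A *m Xpart Delta).
by move=> a b c d; apply/matrixP => i j; rewrite !mxE; ring.
Qed.

End RobustLMI.

Section ClosedLoop.
Variables (R : realType) (n m T : nat).
Variables (A : 'M[R]_n) (B : 'M[R]_(n, m)) (Z X : 'M[R]_(n, T)) (U : 'M[R]_(m, T)).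
Hypothesis data_eq : Z = A *m X + B *m U.
Variables (Q : 'M[R]_n) (V : 'M[R]_m) (eps JLQR : R).
Variables (L : 'M[R]_(T, n)) (S : 'M[R]_m) (alpha beta : R).

Lemma robust_lyapunov_cert (Delta : 'M[R]_(n + n + m, T)) :
  let DD := col_mx (col_mx Z X) U + Delta in
  RS_feasible Q V eps JLQR DD L S alpha beta -> 0 <= eps ->
  (forall i j, `|Delta i j| <= eps) ->
  lyapunov_cert (A + B *m FK L DD) (Xpart DD *m L).
Proof.
move=> DD [_ psdF psdG alpha0 beta1] eps0 Delta_le.
have [symY _ _] := Fmat_psd_facts psdF; have Y_ge1 := Fmat_psd_ge1 psdF.
have KY := FK_mulmx psdF.
set Y := Xpart DD *m L in symY Y_ge1 KY *; set K := FK L DD in KY *.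
split=> // x; first exact: le_trans (sqnorm_ge0 x) (Y_ge1 x).
set p := row_mx (row_mx x (x *m A)) (x *m B).
have N0 : 0 <= qform (Nmat eps DD) (row_mx p (- (x *m B *m K))).
  rewrite Nmat_qform data_residual // subr_ge0.
  have -> : sqnorm p = sqnorm (row_mx (row_mx x (- (x *m A))) (- (x *m B))).
    by rewrite !sqnorm_row_mx !sqnormN.
  exact: sqnorm_mul_le.
have := psd_qform psdG (row_mx p (- (x *m B *m K))).
rewrite qformBm qformZm Gmat_qform_closed_loop // -/Y.
have : sqnorm x <= beta * sqnorm x by rewrite ler_peMl ?sqnorm_ge0.
have := mulr_ge0 alpha0 N0; lra.
Qed.

Lemma nominal_lyapunov_cert :
  let D := col_mx (col_mx Z X) U in psd (Fmat V L S D) ->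
  lyapunov_cert (A + B *m FK L D) (Xpart D *m L).
Proof.
move=> D psdF; have [symY _ F22] := Fmat_psd_facts psdF.
have Y_ge1 := Fmat_psd_ge1 psdF; have KY := FK_mulmx psdF.
set Y := Xpart D *m L in symY Y_ge1 F22 KY *; set K := FK L D in KY *.
have ZL : Zpart D *m L = (A + B *m K) *m Y.
  have eX : Xpart D = X by rewrite /Xpart col_mxKu col_mxKd.
  have eU : Upart D = U by rewrite /Upart col_mxKd.
  rewrite /Zpart !col_mxKu data_eq mulmxDl -!mulmxA -eX -eU -KY.
  by rewrite mulmxDl !mulmxA.
split=> // [x|x]; first exact: le_trans (sqnorm_ge0 x) (Y_ge1 x).
have := F22 x (- (x *m (A + B *m K))).
rewrite ZL bformNr bform_mulmxl -/(qform Y _) qformN qformBm qform_scalar mul1r.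
lra.
Qed.

End ClosedLoop.

Theorem proposition7 (R : realType) (n m T : nat)
    (A : 'M[R]_n) (B : 'M[R]_(n, m))
    (Z X : 'M[R]_(n, T)) (U : 'M[R]_(m, T))
    (Q : 'M[R]_n) (Rw : 'M[R]_m) (V : 'M[R]_m) (eps JLQR : R)
    (Delta : 'M[R]_(n + n + m, T))
    (L : 'M[R]_(T, n)) (S : 'M[R]_m) (alpha beta : R) :
  Z = A *m X + B *m U ->
  0 < eps -> 0 < JLQR ->
  psd Q -> pd Rw -> pd V -> V *m V = Rw ->
  let DD := col_mx (col_mx Z X) U + Delta in
  RS_feasible Q V eps JLQR DD L S alpha beta ->
  let K := FK L DD in
  (Delta = 0 -> (lqr_cost A B Q Rw K <= JLQR%:E)%E) /\
  (mx_maxnorm Delta <= eps -> schur (A + B *m K)).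
Proof.
move=> data_eq eps_gt0 _ psdQ _ [symV _] VV DD feas K; split=> [Delta0|Delta_le].
- have DD0 : DD = col_mx (col_mx Z X) U by rewrite /DD Delta0 addr0.
  move: feas; rewrite /K DD0 => -[cost_le psdF _ _ _].
  have cert := nominal_lyapunov_cert data_eq psdF.
  have Rw_gram : Rw = V^T *m V by rewrite symV.
  apply: le_trans (lqr_cost_le_lyapunov psdQ Rw_gram cert) _.
  by rewrite lee_fin; have := Fmat_psd_trace_le psdF; lra.
- apply: lyapunov_schur (robust_lyapunov_cert data_eq feas (ltW eps_gt0) _).
  by move=> i j; apply: le_trans (mx_maxnorm_ge Delta i j) Delta_le.
Qed.
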